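(* In the MDPUC setting of the context, assume Ergodicity, and let $\beta(z)=\mathbb E[\pi_e(A\mid S,U)/\pi_b(A\mid S,U)\mid Z=z]$. Then the stationary density ratio $d(S)$ is the unique function satisfying the moment condition $\mathbb E[d(S)]=1$ together with the conditional moment restriction $d(S')=\mathbb E_b[d(S)\beta(Z)\mid S']$ for all $S'$.
   Context: MDPUC: finite state space $\mathcal S$, actions $[m]$, confounder space $\mathcal U$, transitions $P_T(s'\mid s,a,u)$; at each time step an iid confounder $U_t$ is drawn, $A_t\sim\pi(\cdot\mid S_t,U_t)$, $S_{t+1}\sim P_T(\cdot\mid S_t,A_t,U_t)$. $S'$ is the successor state of $S$, $Z=(S,A,S')$, $X=(Z,U)$. Behavior policy $\pi_b(a\mid s,u)$, evaluation policy $\pi_e(a\mid s,u)$. Ergodicity: the chain of $X$ values under each of $\pi_b,\pi_e$ is ergodic, and under $\pi_b$ it is stationary. $\mathbb E_b$ (and unsubscripted $\mathbb E$) is expectation under the stationary distribution of $\pi_b$; $d(S)$ is the stationary density ratio of $S$: $\mathbb E_e[g(S)]=\mathbb E_b[d(S)g(S)]$ for all measurable $g$. *)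

From HB Require Import structures.
From mathcomp Require Import all_boot all_order all_algebra.
From mathcomp Require Import all_classical all_reals all_analysis.
Set Implicit Arguments. Unset Strict Implicit. Unset Printing Implicit Defensive.
Import Order.TTheory GRing.Theory Num.Theory.
Local Open Scope ring_scope.

(* MDPUC with finite state space S, actions 'I_m, confounder space T
   (an arbitrary measurable space) with confounder law P (the iid law of U_t).
   A policy pi s a u = pi(a | s, u); a transition PT s a u s' = P_T(s' | s,a,u). *)

Section MDPUC.
Context {R : realType} {d : measure_display} {T : measurableType d}
  (P : probability T R) {S : finType} {m : nat}.

Definition is_policy (pi : S -> 'I_m -> T -> R) : Prop :=
  [/\ forall s a u, 0 <= pi s a u,
      forall s u, \sum_(a < m) pi s a u = 1
    & forall s a, measurable_fun setT (pi s a)].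

Definition is_transition (PT : S -> 'I_m -> T -> S -> R) : Prop :=
  [/\ forall s a u s', 0 <= PT s a u s',
      forall s a u, \sum_(s' : S) PT s a u s' = 1
    & forall s a s', measurable_fun setT (fun u => PT s a u s')].

Variable PT : S -> 'I_m -> T -> S -> R.

Definition Kmat (pi : S -> 'I_m -> T -> R) (s s' : S) : R :=
  Rintegral P setT (fun u => \sum_(a < m) pi s a u * PT s a u s').

Fixpoint Kpow (pi : S -> 'I_m -> T -> R) (n : nat) (s s' : S) : R :=
  match n with
  | 0 => (s == s')%:R
  | n.+1 => \sum_(t : S) Kpow pi n s t * Kmat pi t s'
  end.

(* Ergodicity of the chain under pi: the (finite-state) chain is irreducible
   and aperiodic, i.e. some power of its transition matrix is entrywise > 0. *)
Definition ergodic (pi : S -> 'I_m -> T -> R) : Prop :=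
  exists n : nat, forall s s' : S, 0 < Kpow pi n s s'.

Definition stationary (pi : S -> 'I_m -> T -> R) (mu : S -> R) : Prop :=
  [/\ forall s, 0 <= mu s, \sum_(s : S) mu s = 1
    & forall s' : S, \sum_(s : S) mu s * Kmat pi s s' = mu s'].

(* Expectation of f(X), X = (S, A, S', U), under the stationary law of the
   X-chain for policy pi whose state marginal is mu:
   S ~ mu, U ~ P, A ~ pi(.|S,U), S' ~ P_T(.|S,A,U). *)
Definition EX (pi : S -> 'I_m -> T -> R) (mu : S -> R)
  (f : S -> 'I_m -> S -> T -> R) : R :=
  \sum_(s : S) \sum_(a < m) \sum_(s' : S)
     mu s * Rintegral P setT (fun u => pi s a u * PT s a u s' * f s a s' u).

(* conditional expectation given a discrete event E of positive probability
   (ratio E[Y 1_E] / P(E); the value on null events is irrelevant) *)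
Definition cond_EX pi mu (Y : S -> 'I_m -> S -> T -> R)
  (E : S -> 'I_m -> S -> T -> bool) : R :=
  EX pi mu (fun s a s' u => Y s a s' u * (E s a s' u)%:R)
  / EX pi mu (fun s a s' u => (E s a s' u)%:R).

Variables (pib pie : S -> 'I_m -> T -> R) (mub mue : S -> R).

(* beta(z) = E_b[ pi_e(A|S,U) / pi_b(A|S,U) | Z = z ],  z = (s, a, s') *)
Definition beta (z : S * 'I_m * S) : R :=
  cond_EX pib mub (fun s a _ u => pie s a u / pib s a u)
    (fun s a s' _ => (s, a, s') == z).

Definition density_ratio (dr : S -> R) : Prop :=
  forall g : S -> R,
    EX pie mue (fun s _ _ _ => g s) = EX pib mub (fun s _ _ _ => dr s * g s).

Definition moment_cond (h : S -> R) : Prop :=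
  EX pib mub (fun s _ _ _ => h s) = 1.

Definition cmr (h : S -> R) : Prop :=
  forall s0 : S,
    h s0 = cond_EX pib mub (fun s a s' _ => h s * beta (s, a, s'))
             (fun _ _ s' _ => s' == s0).

End MDPUC.

From HB Require Import structures.
From mathcomp Require Import all_boot all_order all_algebra.
From mathcomp Require Import all_classical all_reals all_analysis.
From mathcomp Require Import measurable_realfun ring.
Import Order.TTheory GRing.Theory Num.Theory.
Local Open Scope ring_scope.
Set Implicit Arguments. Unset Strict Implicit.

(* Integrating out the confounder, every expectation of a function of
   Z = (S, A, S') is a finite sum of mu(s) q_pi(s, a, s') c(s, a, s') with
   q_pi(s, a, s') = int pi(a | s, u) P_T(s' | s, a, u) dP(u).  Then
   beta = q_e / q_b (where q_b = 0 forces q_e = 0, by absolute continuity of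
   pi_e w.r.t. pi_b), and the conditional moment restriction for h says
   exactly that mu_b h is invariant for the state chain under pi_e, while
   the moment condition says it has mass 1.  Testing the density-ratio
   identity on indicators gives mu_e = mu_b d.  Ergodicity makes mu_b
   positive and the stationary law mu_e of the pi_e-chain unique, so
   mu_b h = mu_e = mu_b d, i.e. h = d. *)

Lemma sum_mul_eq_indicator (R : pzSemiRingType) (I : finType) (F : I -> R) j :
  \sum_i F i * (i == j)%:R = F j.
Proof. by under eq_bigr do rewrite mulr_natr mulrb; rewrite -big_mkcond big_pred1_eq. Qed.

Lemma sum3_mul_eq_indicator (R : pzSemiRingType) (I J K : finType)
    (F : I -> J -> K -> R) i j k :
  \sum_i' \sum_j' \sum_k' F i' j' k' * ((i', j', k') == (i, j, k))%:R = F i j k.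
Proof.
rewrite pair_bigA pair_bigA /=.
under eq_bigr do rewrite -!surjective_pairing.
exact: (sum_mul_eq_indicator (fun p : I * J * K => F p.1.1 p.1.2 p.2)).
Qed.

Lemma ler_summand (R : numDomainType) (I : finType) (F : I -> R) j :
  (forall i, 0 <= F i) -> F j <= \sum_i F i.
Proof. by move=> F0; rewrite (bigD1 j) //= lerDl sumr_ge0. Qed.

Section RintegralFacts.
Context {R : realType} {d : measure_display} {T : measurableType d}.
Variable mu : {measure set T -> \bar R}.

Lemma integrable_sumr (I : Type) (s : seq I) (F : I -> T -> R) :
  (forall i, mu.-integrable setT (EFin \o F i)) ->
  mu.-integrable setT (EFin \o (fun x => \sum_(i <- s) F i x)).
Proof.
move=> intF; apply: (eq_integrable measurableT (fun x => \sum_(i <- s) (F i x)%:E)%E).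
  by move=> x _; rewrite sumEFin.
by apply: integrable_sum => // i _; exact: intF.
Qed.

Lemma Rintegral_sum (I : Type) (s : seq I) (F : I -> T -> R) :
  (forall i, mu.-integrable setT (EFin \o F i)) ->
  Rintegral mu setT (fun x => \sum_(i <- s) F i x) =
  \sum_(i <- s) Rintegral mu setT (F i).
Proof.
move=> intF; elim: s => [|i s IHs].
  by under eq_Rintegral do rewrite big_nil; rewrite Rintegral_cst // mul0r big_nil.
under eq_Rintegral do rewrite big_cons.
by rewrite RintegralD // ?IHs ?big_cons //; exact: integrable_sumr.
Qed.

Lemma Rintegral_eq0_subsupport (f g : T -> R) :
  measurable_fun setT f -> measurable_fun setT g ->
  (forall x, 0 <= f x) -> (forall x, 0 <= g x) ->
  (forall x, 0 < g x -> 0 < f x) ->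
  mu.-integrable setT (EFin \o f) ->
  Rintegral mu setT f = 0 -> Rintegral mu setT g = 0.
Proof.
move=> mf mg f0 g0 gf intf.
rewrite /Rintegral => /eqP; rewrite fine_eq0; last exact: integrable_fin_num.
move=> /eqP intf0.
have mfE : measurable_fun setT (EFin \o f) by exact/measurable_EFinP.
have /(ae_eq_integral_abs mu measurableT mfE) f_ae0 :
    (\int[mu]_(x in setT) `|(f x)%:E| = 0)%E.
  by rewrite -intf0; apply: eq_integral => x _; rewrite gee0_abs // lee_fin.
have g_ae0 : ae_eq mu setT (EFin \o g) (cst 0%E).
  apply: filterS f_ae0 => x /(_ I) [] fx0 _; apply/eqP; rewrite eqe eq_le g0 andbT.
  by rewrite leNgt; apply/negP => /gf; rewrite fx0 ltxx.
rewrite (ae_eq_integral (cst 0%E)) ?integral0 //; exact/measurable_EFinP.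
Qed.

End RintegralFacts.

Section StateChain.
Context {R : realType} {d : measure_display} {T : measurableType d}.
Context (P : probability T R) {S : finType} {m : nat}.
Variable PT : S -> 'I_m -> T -> S -> R.
Hypothesis PT_transition : is_transition PT.

Definition step_prob (pi : S -> 'I_m -> T -> R) (s : S) (a : 'I_m) (s' : S) : R :=
  Rintegral P setT (fun u => pi s a u * PT s a u s').

Section Policy.
Variable pi : S -> 'I_m -> T -> R.
Hypothesis pi_policy : is_policy pi.

Lemma step_integrable s a s' :
  P.-integrable setT (EFin \o (fun u => pi s a u * PT s a u s')).
Proof.
have [pi0 pi1 mpi] := pi_policy; have [PT0 PT1 mPT] := PT_transition.
apply: (le_integrable _ _ _ (finite_measure_integrable_cst P 1 measurableT)) => //.
  by apply/measurable_EFinP; apply: measurable_funM.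
move=> u _; rewrite /= lee_fin normr1 ger0_norm ?mulr_ge0 // -(mulr1 1).
rewrite ler_pM //; first by rewrite -(pi1 s u); apply: ler_summand => b.
by rewrite -(PT1 s a u); apply: ler_summand => t.
Qed.

Lemma Kmat_step_prob s s' : Kmat P PT pi s s' = \sum_(a < m) step_prob pi s a s'.
Proof. by rewrite /Kmat Rintegral_sum // => a; exact: step_integrable. Qed.

Lemma Kmat_row_sum1 s : \sum_(s' : S) Kmat P PT pi s s' = 1.
Proof.
have [_ pi1 _] := pi_policy; have [_ PT1 _] := PT_transition.
rewrite /Kmat -Rintegral_sum; last first.
  by move=> s'; apply: integrable_sumr => a; exact: step_integrable.
under eq_Rintegral => u _.
  rewrite exchange_big /=.
  under eq_bigr do rewrite -mulr_sumr PT1 mulr1.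
  rewrite pi1.
  over.
rewrite Rintegral_cst // mul1r -[RHS]/(fine 1%E); congr fine; exact: probability_setT.
Qed.

Lemma EX_stepE (mu : S -> R) (c : S -> 'I_m -> S -> R) :
  EX P PT pi mu (fun s a s' _ => c s a s') =
  \sum_s \sum_(a < m) \sum_(s' : S) mu s * step_prob pi s a s' * c s a s'.
Proof.
apply: eq_bigr => s _; apply: eq_bigr => a _; apply: eq_bigr => s' _.
by rewrite -mulrA -RintegralZr //; exact: step_integrable.
Qed.

Lemma EX_stateE (mu g : S -> R) :
  EX P PT pi mu (fun s _ _ _ => g s) = \sum_s mu s * g s.
Proof.
rewrite (EX_stepE mu (fun s _ _ => g s)); apply: eq_bigr => s _.
rewrite exchange_big /= -[RHS]mulr1 -(Kmat_row_sum1 s) mulr_sumr.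
apply: eq_bigr => s' _; rewrite Kmat_step_prob mulr_sumr.
by apply: eq_bigr => a _; rewrite mulrAC.
Qed.

Lemma moment_condE (mu h : S -> R) :
  moment_cond P PT pi mu h = (\sum_s mu s * h s = 1).
Proof. by rewrite /moment_cond EX_stateE. Qed.

End Policy.

Definition Kinvariant (pi : S -> 'I_m -> T -> R) (x : S -> R) : Prop :=
  forall s', \sum_s x s * Kmat P PT pi s s' = x s'.

Section Reweighting.
Variables pib pie : S -> 'I_m -> T -> R.
Hypotheses (pib_policy : is_policy pib) (pie_policy : is_policy pie).
Hypothesis pie_supp : forall s a u, 0 < pie s a u -> 0 < pib s a u.

Lemma pie_eq0 s a u : pib s a u = 0 -> pie s a u = 0.
Proof.
have [pie_ge0 _ _] := pie_policy; move=> pib_eq0.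
apply/eqP; rewrite eq_le pie_ge0 andbT leNgt.
by apply/negP => /pie_supp; rewrite pib_eq0 ltxx.
Qed.

Lemma step_prob_eq0 s a s' : step_prob pib s a s' = 0 -> step_prob pie s a s' = 0.
Proof.
have [pib_ge0 _ mpib] := pib_policy; have [pie_ge0 _ mpie] := pie_policy.
have [PT_ge0 _ mPT] := PT_transition.
apply: Rintegral_eq0_subsupport; last exact: step_integrable.
- exact: measurable_funM.
- exact: measurable_funM.
- by move=> u; rewrite mulr_ge0.
- by move=> u; rewrite mulr_ge0.
move=> u; have [PT_le0|PT_gt0] := leP (PT s a u s') 0.
  have -> : PT s a u s' = 0 by apply/le_anti; rewrite PT_le0 PT_ge0.
  by rewrite !mulr0 ltxx.
by rewrite !pmulr_lgt0 //; exact: pie_supp.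
Qed.

Lemma EX_importanceE (mu : S -> R) (c : S -> 'I_m -> S -> R) :
  EX P PT pib mu (fun s a s' u => pie s a u / pib s a u * c s a s') =
  \sum_s \sum_(a < m) \sum_(s' : S) mu s * step_prob pie s a s' * c s a s'.
Proof.
apply: eq_bigr => s _; apply: eq_bigr => a _; apply: eq_bigr => s' _.
rewrite -mulrA -RintegralZr //; last exact: step_integrable.
congr (_ * _); apply: eq_Rintegral => u _.
have [pib_eq0|pib_neq0] := eqVneq (pib s a u) 0; last by field.
by rewrite pib_eq0 pie_eq0 // !mul0r.
Qed.

Lemma density_ratio_mul (mub mue dr : S -> R) :
  density_ratio P PT pib pie mub mue dr -> forall t, mue t = mub t * dr t.
Proof.
move=> dr_ratio t; have := dr_ratio (fun s => (s == t)%:R).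
rewrite !EX_stateE // sum_mul_eq_indicator.
by under eq_bigr do rewrite mulrA; rewrite sum_mul_eq_indicator.
Qed.

Variable mub : S -> R.

Lemma beta_step_prob s a s' :
  beta P PT pib pie mub (s, a, s') =
  mub s * step_prob pie s a s' / (mub s * step_prob pib s a s').
Proof.
rewrite /beta /cond_EX.
rewrite (EX_importanceE mub (fun s1 a1 s1' => ((s1, a1, s1') == (s, a, s'))%:R)).
rewrite (EX_stepE pib_policy mub (fun s1 a1 s1' => ((s1, a1, s1') == (s, a, s'))%:R)).
by rewrite !(sum3_mul_eq_indicator (fun s1 a1 s1' => mub s1 * step_prob _ s1 a1 s1')).
Qed.

(* Also where mu_b(s) q_b(s, a, s') = 0 and beta takes the junk value 0 / 0. *)
Lemma step_prob_beta s a s' :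
  mub s * step_prob pib s a s' * beta P PT pib pie mub (s, a, s') =
  mub s * step_prob pie s a s'.
Proof.
rewrite beta_step_prob.
have [w0|w_neq0] := eqVneq (mub s * step_prob pib s a s') 0; last by rewrite mulrC divfK.
rewrite w0 mul0r; move/eqP: w0; rewrite mulf_eq0 => /orP[/eqP->|/eqP/step_prob_eq0->].
  by rewrite mul0r.
by rewrite mulr0.
Qed.

Hypothesis mub_stationary : stationary P PT pib mub.

Lemma cond_EX_beta (h : S -> R) s0 :
  cond_EX P PT pib mub (fun s a s' _ => h s * beta P PT pib pie mub (s, a, s'))
    (fun _ _ s' _ => s' == s0) =
  (\sum_s mub s * h s * Kmat P PT pie s s0) / mub s0.
Proof.
have [_ _ mub_inv] := mub_stationary.
rewrite /cond_EX (EX_stepE pib_policy mub (fun s a s' =>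
  h s * beta P PT pib pie mub (s, a, s') * (s' == s0)%:R)).
rewrite (EX_stepE pib_policy mub (fun _ _ s' => (s' == s0)%:R)) -[in RHS]mub_inv.
congr (_ / _); apply: eq_bigr => s _; rewrite Kmat_step_prob // mulr_sumr;
  apply: eq_bigr => a _.
  under eq_bigr do rewrite mulrA.
  by rewrite sum_mul_eq_indicator mulrA mulrAC step_prob_beta mulrAC.
by rewrite sum_mul_eq_indicator.
Qed.

Lemma cmr_Kinvariant (h : S -> R) : (forall s, 0 < mub s) ->
  cmr P PT pib pie mub h <-> Kinvariant pie (fun s => mub s * h s).
Proof.
move=> mub_gt0; split=> h_eq s0.
  by rewrite [h s0]h_eq cond_EX_beta [RHS]mulrC divfK // gt_eqF.
by rewrite cond_EX_beta h_eq [mub s0 * _]mulrC mulfK // gt_eqF.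
Qed.

End Reweighting.

Section Ergodicity.
Variable pi : S -> 'I_m -> T -> R.

Lemma Kinvariant_Kpow (x : S -> R) : Kinvariant pi x ->
  forall n s', \sum_s x s * Kpow P PT pi n s s' = x s'.
Proof.
move=> x_inv; elim=> [|n IHn] s' /=; first exact: sum_mul_eq_indicator.
under eq_bigr do rewrite mulr_sumr.
rewrite exchange_big /= -[RHS]x_inv; apply: eq_bigr => t _.
by rewrite -IHn mulr_suml; apply: eq_bigr => r _; rewrite mulrA.
Qed.

Hypothesis pi_ergodic : ergodic P PT pi.

Lemma Kinvariant_ge0_eq0 (v : S -> R) k : (forall s, 0 <= v s) ->
  Kinvariant pi v -> v k = 0 -> forall t, v t = 0.
Proof.
move=> v_ge0 v_inv vk0 t; have [n Kn_gt0] := pi_ergodic.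
have /eqP := Kinvariant_Kpow v_inv n k; rewrite vk0 psumr_eq0; last first.
  by move=> s _; rewrite mulr_ge0 // ltW.
move=> /allP/(_ t (mem_index_enum t)) /=.
by rewrite mulf_eq0 (gt_eqF (Kn_gt0 t k)) orbF => /eqP.
Qed.

Variable mu : S -> R.
Hypothesis mu_stationary : stationary P PT pi mu.

Lemma stationary_gt0 s : 0 < mu s.
Proof.
have [mu_ge0 mu_sum1 mu_inv] := mu_stationary.
rewrite lt_def mu_ge0 andbT; apply/eqP => mu_s0.
have mu0 t : mu t = 0 by exact: (Kinvariant_ge0_eq0 mu_ge0 mu_inv mu_s0).
by move: mu_sum1; rewrite big1 // => /esym/eqP; rewrite oner_eq0.
Qed.

Lemma stationary_unique (w : S -> R) :
  \sum_s w s = 1 -> Kinvariant pi w -> w = mu.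
Proof.
move=> w_sum1 w_inv; have [_ mu_sum1 mu_inv] := mu_stationary.
have mu_gt0 := stationary_gt0.
case: (pickP (fun _ : S => true)) => [i0 _|S_empty]; last first.
  by move: w_sum1; rewrite big_pred0 // => /esym/eqP; rewrite oner_eq0.
have [k _ k_min] := @arg_minP _ _ S i0 xpredT (fun i => w i / mu i) isT.
(* With c the minimum of w / mu, w - c mu is nonnegative, invariant and vanishes at k. *)
pose c := w k / mu k; pose v s := w s - c * mu s.
have v_ge0 s : 0 <= v s by rewrite subr_ge0 -ler_pdivlMr //; exact: k_min.
have v_inv : Kinvariant pi v.
  move=> s'; under eq_bigr do rewrite mulrBl -mulrA.
  by rewrite sumrB -mulr_sumr w_inv mu_inv.
have vk0 : v k = 0 by rewrite /v /c divfK ?subrr // gt_eqF.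
have w_cmu s : w s = c * mu s.
  exact/subr0_eq/(Kinvariant_ge0_eq0 v_ge0 v_inv vk0).
have c1 : c = 1.
  by move: w_sum1; under eq_bigr do rewrite w_cmu; rewrite -mulr_sumr mu_sum1 mulr1.
by apply: funext => s; rewrite w_cmu c1 mul1r.
Qed.

End Ergodicity.
End StateChain.

Unset Implicit Arguments.

Theorem theorem4 (R : realType) (d : measure_display) (T : measurableType d)
  (P : probability T R) (S : finType) (m : nat)
  (PT : S -> 'I_m -> T -> S -> R) (pib pie : S -> 'I_m -> T -> R)
  (mub mue : S -> R) (dr : S -> R) :
  is_transition PT -> is_policy pib -> is_policy pie ->
  (forall s a u, 0 < pie s a u -> 0 < pib s a u) ->
  ergodic P PT pib -> ergodic P PT pie ->
  stationary P PT pib mub -> stationary P PT pie mue ->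
  density_ratio P PT pib pie mub mue dr ->
  (moment_cond P PT pib mub dr /\ cmr P PT pib pie mub dr) /\
  (forall h : S -> R,
     moment_cond P PT pib mub h -> cmr P PT pib pie mub h -> h = dr).
Proof.
move=> PT_tr pib_pol pie_pol pie_supp pib_erg pie_erg mub_st mue_st dr_ratio.
have mub_gt0 := stationary_gt0 pib_erg mub_st.
have mueE := density_ratio_mul PT_tr pib_pol pie_pol dr_ratio.
have cmrE h := cmr_Kinvariant PT_tr pib_pol pie_pol pie_supp mub_st h mub_gt0.
have [_ mue_sum1 mue_inv] := mue_st.
split; [split|].
- by rewrite moment_condE //; under eq_bigr do rewrite -mueE.
- apply/(cmrE dr) => s0 /=; under eq_bigr do rewrite -mueE.
  by rewrite mue_inv mueE.
- move=> h; rewrite moment_condE // => h_sum1 /(cmrE h) h_inv; apply: funext => t.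
  have /(congr1 (fun w => w t)) := stationary_unique pie_erg mue_st h_sum1 h_inv.
  by rewrite /= mueE => /(mulfI (lt0r_neq0 (mub_gt0 t))).
Qed.
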